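(* Let $R$ be an NC-nilpotent algebra, $\pi:R\to R_{ab}$ the abelianization map, and $\overline S\subset R_{ab}-\{0\}$ any multiplicative subset. Then $S=\pi^{-1}(\overline S)$ satisfies the Ore conditions: (OL1) for any $a\in R$, $s\in S$ there are $b\in R$, $u\in S$ with $ua=bs$; (OL2) if $as=0$ with $a\in R,s\in S$ then $ta=0$ for some $t\in S$; (OR1) for any $b\in R$, $u\in S$ there are $a\in R$, $s\in S$ with $ua=bs$; (OR2) if $sa=0$ with $a\in R,s\in S$ then $at=0$ for some $t\in S$.
   Context: Algebras are associative unital $\mathbf{C}$-algebras. $R_{ab}=R/[R,R]$. NC-filtration: with $R^{\rm Lie}_1=R$, $R^{\rm Lie}_m=[R,R^{\rm Lie}_{m-1}]$ ($[a,b]=ab-ba$), $F^dR=\sum_m\sum_{i_1+\dots+i_m-m=d}R\,R^{\rm Lie}_{i_1}R\cdots R\,R^{\rm Lie}_{i_m}R$. $R$ is NC-nilpotent if $F^iR=0$ for $i\gg0$. *)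

From HB Require Import structures.
From mathcomp Require Import all_boot all_order all_algebra.
From mathcomp Require Import complex.
From mathcomp Require Import Rstruct.
Set Implicit Arguments. Unset Strict Implicit. Unset Printing Implicit Defensive.
Import Order.TTheory GRing.Theory Num.Theory.
Local Open Scope ring_scope.

Definition CC : fieldType := (Rdefinitions.R)[i].

Section NC.
Variable A : algType CC.

Definition lspan (P : A -> Prop) : A -> Prop :=
  fun x => exists s : seq (CC * A),
    (forall p, p \in s -> P p.2) /\ x = \sum_(p <- s) p.1 *: p.2.

Definition commr (a b : A) : A := a * b - b * a.

(* Lie powers: R^Lie_1 = R, R^Lie_{m} = [R, R^Lie_{m-1}] (a subspace,
   i.e. the span of the commutators [a,b], a in R, b in R^Lie_{m-1}).
   Index 0 is never used (indices start at 1); we set it to R. *)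
Fixpoint lie_pow (m : nat) : A -> Prop :=
  match m with
  | 0 => fun _ => True
  | 1 => fun _ => True
  | m'.+1 => lspan (fun x => exists a b, lie_pow m' b /\ x = commr a b)
  end.

(* F^d R = sum over m and (i_1,...,i_m) (all i_j >= 1) with
   i_1+...+i_m - m = d of  R R^Lie_{i_1} R ... R R^Lie_{i_m} R.
   As a subspace it is spanned by the products
     r_0 * l_1 * r_1 * ... * l_m * r_m,  l_j in R^Lie_{i_j}, r_j in R,
   encoded by r_0 and the sequence of triples (i_j, l_j, r_j). *)
Definition NC_gen (d : nat) (x : A) : Prop :=
  exists (r0 : A) (s : seq (nat * A * A)),
    (forall t, t \in s -> (0 < t.1.1)%N /\ lie_pow t.1.1 t.1.2) /\
    (\sum_(t <- s) t.1.1 - size s)%N = d /\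
    x = r0 * \prod_(t <- s) (t.1.2 * t.2).

Definition NC_filt (d : nat) : A -> Prop := lspan (NC_gen d).

Definition NC_nilpotent : Prop :=
  exists N : nat, forall i : nat, (N <= i)%N -> forall x : A, NC_filt i x -> x = 0.

Definition comm_ideal (x : A) : Prop :=
  exists s : seq (A * A * A * A),
    x = \sum_(t <- s) t.1.1.1 * commr t.1.1.2 t.1.2 * t.2.
End NC.

Definition is_abelianization (A : algType CC) (B : comPzRingType)
  (pi : {rmorphism A -> B}) : Prop :=
  (forall y : B, exists x : A, pi x = y) /\
  (forall x : A, pi x = 0 <-> comm_ideal x).

Definition multiplicative (B : comPzRingType) (Sb : B -> Prop) : Prop :=
  Sb 1 /\ (forall x y, Sb x -> Sb y -> Sb (x * y)).

(** The inner derivation [ad_y = commr y] raises the NC-filtration by one: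
    by the Leibniz rule, [ad_y] of a generator [r0 l1 r1 ... lm rm] of [F^d]
    is a sum of such products in which one factor is replaced by its
    commutator with [y], which raises the Lie degree of that factor (an [r]
    becomes an element of [R^Lie_2]).  Hence for [s] in [S] we have
    [s a = a s + [s, a]] with [[s, a]] one step deeper in the filtration than
    [a], and since [F^N = 0] the Ore equations are solved by descending
    induction on the filtration degree of [a]. *)
From mathcomp Require Import all_boot all_order all_algebra.
Set Implicit Arguments. Unset Strict Implicit. Unset Printing Implicit Defensive.
Local Open Scope ring_scope.

Lemma sumn_predK (I : eqType) (s : seq I) (f : I -> nat) :
  {in s, forall i, 0 < f i}%N ->
  (\sum_(i <- s) (f i).-1 + size s)%N = (\sum_(i <- s) f i)%N.
Proof.
move=> f_gt0; rewrite -sum1_size -big_split /=.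
by apply: eq_big_seq => i /f_gt0; rewrite addn1 => /prednK.
Qed.

Section NCFiltration.
Variable A : algType CC.
Import GRing.Theory.
Implicit Types (P Q : A -> Prop) (x y z l : A).

Lemma lspan0 P : lspan P 0.
Proof. by exists [::]; rewrite big_nil. Qed.

Lemma lspan_gen P x : P x -> lspan P x.
Proof.
move=> Px; exists [:: (1, x)]; split; last by rewrite big_seq1 scale1r.
by move=> p; rewrite inE => /eqP ->.
Qed.

Lemma lspanD P x y : lspan P x -> lspan P y -> lspan P (x + y).
Proof.
move=> [s1 [s1P ->]] [s2 [s2P ->]]; exists (s1 ++ s2).
by split=> [p|]; [rewrite mem_cat => /orP [/s1P|/s2P] | rewrite big_cat].
Qed.

Lemma lspanZ P c x : lspan P x -> lspan P (c *: x).
Proof.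
move=> [s [sP ->]]; exists [seq (c * p.1, p.2) | p <- s]; split.
  by move=> p /mapP [q /sP qP ->].
by rewrite big_map scaler_sumr; apply: eq_bigr => p _; rewrite scalerA.
Qed.

Lemma lspanN P x : lspan P x -> lspan P (- x).
Proof. by rewrite -scaleN1r; apply: lspanZ. Qed.

Lemma lspan_linear P Q (f : A -> A) : linear f ->
  (forall x, P x -> lspan Q (f x)) -> forall x, lspan P x -> lspan Q (f x).
Proof.
move=> f_lin fPQ _ [s [sP ->]].
have f0 : f 0 = 0.
  by have := f_lin (-1) 0 0; rewrite scaler0 addr0 scaleN1r addNr.
elim: s sP => [|p s IHs] sP; first by rewrite big_nil f0; apply: lspan0.
rewrite big_cons f_lin; apply: lspanD; first by apply/lspanZ/fPQ/sP/mem_head.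
by apply: IHs => q sq; apply: sP; rewrite inE sq orbT.
Qed.

Lemma commr_linear y : linear (commr y).
Proof.
move=> c u v; rewrite /commr mulrDr mulrDl -scalerAl -scalerAr scalerBr.
by rewrite opprD addrACA.
Qed.

Lemma commrM y u v : commr y (u * v) = commr y u * v + u * commr y v.
Proof. by rewrite /commr mulrBl mulrBr !mulrA addrA subrK. Qed.

Lemma lie_pow_commr i y l :
  (0 < i)%N -> lie_pow i l -> lie_pow i.+1 (commr y l).
Proof. by case: i => [//|i] _ li; apply: lspan_gen; exists y, l. Qed.

(** A generator of [F^d] is encoded by a list of triples [(i, l, r)] with
    [l] in [R^Lie_i]; since [R^Lie_1 = R], the leading factor [r0] can be
    absorbed as the triple [(1, r0, 1)]. *)
Definition lie_triple (t : nat * A * A) : Prop :=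
  (0 < t.1.1)%N /\ lie_pow t.1.1 t.1.2.

Definition nc_word (s : seq (nat * A * A)) : A := \prod_(t <- s) (t.1.2 * t.2).

Definition nc_word_deg (s : seq (nat * A * A)) : nat :=
  (\sum_(t <- s) t.1.1.-1)%N.

Lemma NC_gen_word s :
  {in s, forall t, lie_triple t} -> NC_gen (nc_word_deg s) (nc_word s).
Proof.
move=> sL; exists 1, s; split=> //; split; last by rewrite mul1r.
by rewrite -(sumn_predK (f := fun t => t.1.1)) ?addnK // => t /sL [].
Qed.

Lemma NC_genP d x : NC_gen d x ->
  exists2 s, {in s, forall t, lie_triple t} & d = nc_word_deg s /\ x = nc_word s.
Proof.
move=> [r0 [s [sL [<- ->]]]]; exists ((1%N, r0, 1) :: s).
  by move=> t; rewrite inE => /predU1P [-> //|/sL].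
rewrite /nc_word_deg /nc_word !big_cons mulr1 add0n; split=> //.
by rewrite -(sumn_predK (f := fun t => t.1.1)) ?addnK // => t /sL [].
Qed.

Lemma NC_gen_mul d e x z : NC_gen d x -> NC_gen e z -> NC_gen (d + e) (x * z).
Proof.
move=> /NC_genP [s sL [-> ->]] /NC_genP [s' s'L [-> ->]].
rewrite /nc_word_deg /nc_word -!big_cat; apply: NC_gen_word.
by move=> t; rewrite mem_cat => /orP [/sL|/s'L].
Qed.

Lemma NC_gen_lie i l : (0 < i)%N -> lie_pow i l -> NC_gen i.-1 l.
Proof.
move=> i_gt0 li; have := @NC_gen_word [:: (i, l, 1)].
rewrite /nc_word_deg /nc_word !big_seq1 /= mulr1; apply.
by move=> t; rewrite inE => /eqP ->.
Qed.

Lemma NC_gen0 x : NC_gen 0 x.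
Proof. exact: (@NC_gen_lie 1). Qed.

Lemma NC_gen_ind (R : nat -> A -> Prop) :
  (forall i l, (0 < i)%N -> lie_pow i l -> R i.-1 l) ->
  (forall d e x z, R d x -> R e z -> R (d + e) (x * z)) ->
  forall d x, NC_gen d x -> R d x.
Proof.
move=> Rlie RM d x /NC_genP [s sL [-> ->]] {d x}.
have R0 x : R 0%N x by exact: (@Rlie 1).
elim: s sL => [|[[i l] r] s IHs] sL.
  by rewrite /nc_word /nc_word_deg !big_nil.
have [i_gt0 li] := sL _ (mem_head _ _).
rewrite /nc_word /nc_word_deg !big_cons -/(nc_word s) -/(nc_word_deg s) /=.
have Rlr : R i.-1 (l * r).
  by rewrite -[i.-1]addn0; apply: RM; [apply: Rlie | apply: R0].
by apply: RM Rlr (IHs _) => t st; apply: sL; rewrite inE st orbT.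
Qed.

Lemma NC_filt0 x : NC_filt 0 x.
Proof. exact/lspan_gen/NC_gen0. Qed.

Lemma NC_filt_mull d e x z : NC_gen d x -> NC_filt e z -> NC_filt (d + e) (x * z).
Proof.
move=> xd; apply: lspan_linear => [c u v|g ge]; last exact/lspan_gen/NC_gen_mul.
by rewrite mulrDr scalerAr.
Qed.

Lemma NC_filt_mulr d e x z : NC_filt d x -> NC_gen e z -> NC_filt (d + e) (x * z).
Proof.
move=> xd ze; apply: (lspan_linear (f := fun u => u * z)) xd => [c u v|g gd].
  by rewrite mulrDl scalerAl.
exact/lspan_gen/NC_gen_mul.
Qed.

Lemma NC_gen_commr y d x : NC_gen d x -> NC_filt d.+1 (commr y x).
Proof.
suff: NC_gen d x -> NC_gen d x /\ NC_filt d.+1 (commr y x) by move=> h /h [].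
apply: (NC_gen_ind (R := fun d x => NC_gen d x /\ NC_filt d.+1 (commr y x))).
  move=> i l i_gt0 li; split; first exact: NC_gen_lie.
  by rewrite prednK //; apply/lspan_gen/(@NC_gen_lie i.+1)/lie_pow_commr.
move=> d1 d2 x1 x2 [x1d xy1] [x2d xy2]; split; first exact: NC_gen_mul.
rewrite commrM; apply: lspanD; first by rewrite -addSn; apply: NC_filt_mulr.
by rewrite -addnS; apply: NC_filt_mull.
Qed.

Lemma NC_filt_commr y d x : NC_filt d x -> NC_filt d.+1 (commr y x).
Proof. by apply: (lspan_linear (commr_linear y)) => g; apply: NC_gen_commr. Qed.

Section Ore.
Hypothesis nilA : NC_nilpotent A.

Lemma NC_nilpotent_ind (R : A -> Prop) : R 0 ->
  (forall d x, (forall z, NC_filt d.+1 z -> R z) -> NC_filt d x -> R x) ->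
  forall x, R x.
Proof.
move: nilA => [N nilN] R0 Rstep x.
suff Rdeep n d : (N <= n + d)%N -> forall x, NC_filt d x -> R x.
  by apply: (Rdeep N 0%N); rewrite ?addn0 //; apply: NC_filt0.
elim: n d => [|n IHn] d Nd {}x xd; first by rewrite (nilN d _ x xd).
by apply: Rstep xd => z zd; apply: IHn zd; rewrite -addSnnS.
Qed.

Variable S : A -> Prop.
Hypothesis SM : forall u v, S u -> S v -> S (u * v).

Lemma left_ore a s : S s -> exists b u, S u /\ u * a = b * s.
Proof.
move=> Ss; elim/NC_nilpotent_ind: a; first by exists 0, s; rewrite mulr0 mul0r.
move=> d a IHa ad; have [b [u [Su e]]] := IHa _ (NC_filt_commr s ad).
exists (u * a + b), (u * s); split; first exact: SM.
by rewrite mulrDl -e /commr mulrBr !mulrA addrC subrK.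
Qed.

Lemma left_reversible a s : S s -> a * s = 0 -> exists t, S t /\ t * a = 0.
Proof.
move=> Ss; elim/NC_nilpotent_ind: a => [_|d a IHa ad as0].
  by exists s; rewrite mulr0.
have [|t [St e]] := IHa _ (NC_filt_commr s ad).
  by rewrite /commr mulrBl -!mulrA as0 mulr0 mulrA as0 mul0r subrr.
exists (t * s); split; first exact: SM.
by rewrite /commr as0 subr0 mulrA in e.
Qed.

Lemma right_ore b u : S u -> exists a s, S s /\ u * a = b * s.
Proof.
move=> Su; elim/NC_nilpotent_ind: b; first by exists 0, u; rewrite mulr0 mul0r.
move=> d b IHb bd; have [a [s [Ss e]]] := IHb _ (lspanN (NC_filt_commr u bd)).
exists (b * s + a), (u * s); split; first exact: SM.
by rewrite mulrDr e /commr opprB mulrBl !mulrA addrC subrK.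
Qed.

Lemma right_reversible a s : S s -> s * a = 0 -> exists t, S t /\ a * t = 0.
Proof.
move=> Ss; elim/NC_nilpotent_ind: a => [_|d a IHa ad sa0].
  by exists s; rewrite mul0r.
have [|t [St e]] := IHa _ (lspanN (NC_filt_commr s ad)).
  by rewrite /commr opprB mulrBr !mulrA sa0 mul0r -mulrA sa0 mulr0 subrr.
exists (s * t); split; first exact: SM.
by rewrite /commr opprB sa0 subr0 -mulrA in e.
Qed.

End Ore.
End NCFiltration.

Theorem proposition2p1p5 (A : algType CC) (B : comPzRingType)
  (pi : {rmorphism A -> B}) (Sb : B -> Prop) :
  NC_nilpotent A ->
  is_abelianization pi ->
  multiplicative Sb ->
  (forall y, Sb y -> y <> 0) ->
  let S := fun s : A => Sb (pi s) in
  (* (OL1) *) (forall a s : A, S s -> exists b u : A, S u /\ u * a = b * s) /\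
  (* (OL2) *) (forall a s : A, S s -> a * s = 0 -> exists t : A, S t /\ t * a = 0) /\
  (* (OR1) *) (forall b u : A, S u -> exists a s : A, S s /\ u * a = b * s) /\
  (* (OR2) *) (forall a s : A, S s -> s * a = 0 -> exists t : A, S t /\ a * t = 0).
Proof.
move=> nilA _ [_ SbM] _ S.
have SM u v : S u -> S v -> S (u * v) by rewrite /S GRing.rmorphM; apply: SbM.
split; first exact: left_ore.
split; first exact: left_reversible.
split; first exact: right_ore.
exact: right_reversible.
Qed.
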